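(* Let $e_1,\dots,e_n>0$ with $\sum_ie_i=1$ and fix the reported demands of all agents other than $i$. Let $a_i$ and $a_i'$ be agent $i$'s MMF allocations when she reports $d_i$ and $d_i'$ respectively. If $d_i<d_i'$, then $a_i\le a_i'$, with equality only when agent $i$ is allocated in the saturating step (rather than being allocated her reported demand) under both reports.
   Context: MMF$(e,d)$: set $r=1$, $E=1$, $S=\{1,\dots,n\}$, $a=0$; process agents $j$ in ascending order of $d_j/e_j$; if $d_j<re_j/E$, set $a_j=d_j$ (agent $j$ is ''allocated her reported demand''), remove $j$ from $S$, $r\leftarrow r-d_j$, $E\leftarrow E-e_j$ and continue; otherwise (the ''saturating step'') set $a_k=re_k/E$ for all $k\in S$ and stop; output $a$. *)

From mathcomp Require Import all_boot all_order all_algebra.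
Set Implicit Arguments. Unset Strict Implicit. Unset Printing Implicit Defensive.
Import Order.TTheory GRing.Theory Num.Theory.
Local Open Scope ring_scope.

Section MMF.
Variables (R : realFieldType) (n : nat) (e d : 'I_n -> R).

(* Processing order: ascending d_j / e_j; ties broken by agent index
   (mathcomp's sort is stable on enum 'I_n). *)
Definition mmf_order : seq 'I_n :=
  sort (fun j k : 'I_n => d j / e j <= d k / e k) (enum 'I_n).

(* mmf_aux l r E k = (a_k, b_k) where l is the list of still-unprocessed
   agents (the set S, in processing order), r the remaining resource, E the
   remaining endowment; b_k = true iff k is allocated in the saturating step. *)
Fixpoint mmf_aux (l : seq 'I_n) (r E : R) : 'I_n -> R * bool :=
  match l with
  | [::] => fun _ => (0, false)
  | j :: l' =>
      if d j < r * e j / E then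
        fun k => if k == j then (d j, false)
                 else mmf_aux l' (r - d j) (E - e j) k
      else fun k => (r * e k / E, true)
  end.

Definition MMF (k : 'I_n) : R := (mmf_aux mmf_order 1 1 k).1.
Definition MMF_saturated (k : 'I_n) : bool := (mmf_aux mmf_order 1 1 k).2.
End MMF.

Definition upd (R : Type) (n : nat) (d : 'I_n -> R) (i : 'I_n) (x : R) : 'I_n -> R :=
  fun j => if j == i then x else d j.

From mathcomp Require Import all_boot all_order all_algebra.
From mathcomp Require Import lra.
Set Implicit Arguments. Unset Strict Implicit. Unset Printing Implicit Defensive.
Import Order.TTheory GRing.Theory Num.Theory.
Local Open Scope ring_scope.

(* MMF is water filling: either all demands fit (sum d < 1) and everybody is
   served, or there is a level lam with sum_k min(d_k, lam e_k) = 1, agent k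
   receives min(d_k, lam e_k) and is saturated iff lam e_k <= d_k.
   When only d_i grows, a strictly lower level would give every agent at most
   as much while distributing the same total, impossible as soon as somebody
   is capped.  Hence if i is capped under d_i the level does not drop and her
   share lam e_i can only grow, strictly unless she is capped under d_i' too;
   if she is not capped she gets d_i, and getting at most d_i under d_i' would
   force the level down. *)

Lemma ltr_sum_at (R : numDomainType) (I : finType) (F G : I -> R) (k0 : I) :
  (forall k, F k <= G k) -> F k0 < G k0 -> \sum_k F k < \sum_k G k.
Proof.
move=> le_FG lt_FG; rewrite [ltLHS](bigD1 k0) // [ltRHS](bigD1 k0) //=.
by rewrite ltr_leD // ler_sum.
Qed.

Section WaterFilling.
Variables (R : realFieldType) (n : nat) (e d : 'I_n -> R).
Hypothesis e_gt0 : forall k, 0 < e k.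

Definition water (lam : R) (k : 'I_n) : R := Num.min (d k) (lam * e k).

Lemma water_le_demand lam k : water lam k <= d k.
Proof. by rewrite ge_min lexx. Qed.

Lemma water_le_level lam k : water lam k <= lam * e k.
Proof. by rewrite ge_min lexx orbT. Qed.

Let ratio_le (j k : 'I_n) := d j / e j <= d k / e k.

Lemma capped_below_head j l lam :
  sorted ratio_le (j :: l) -> lam <= d j / e j ->
  {in l, forall k, lam * e k <= d k}.
Proof.
move=> sorted_jl le_lam k kl.
have ratio_trans : transitive ratio_le by move=> ? ? ?; exact: le_trans.
have /allP/(_ k kl) le_jk := order_path_min ratio_trans sorted_jl.
by rewrite -ler_pdivlMr // (le_trans le_lam le_jk).
Qed.

Lemma sum_e_gt0 l k : k \in l -> 0 < \sum_(j <- l) e j.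
Proof.
move=> kl; rewrite (big_rem k) //= ltr_wpDr // sumr_ge0 // => j _.
exact: ltW.
Qed.

Variant aux_spec (l : seq 'I_n) (r E : R) : Prop :=
  | AuxServed of \sum_(k <- l) d k < r
      & {in l, forall k, mmf_aux e d l r E k = (d k, false)}
  | AuxLevel lam of \sum_(k <- l) water lam k = r
      & has (fun k => lam * e k <= d k) l
      & {in l, forall k, mmf_aux e d l r E k = (water lam k, lam * e k <= d k)}.

Lemma aux_saturating j l r E :
  sorted ratio_le (j :: l) -> E = \sum_(k <- j :: l) e k ->
  ~~ (d j < r * e j / E) -> aux_spec (j :: l) r E.
Proof.
move=> sorted_jl def_E; rewrite -leNgt => le_dj.
have E_gt0 : 0 < E by rewrite def_E (sum_e_gt0 (mem_head j l)).
have capped k : k \in j :: l -> r / E * e k <= d k.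
  rewrite in_cons => /predU1P [-> | kl]; first by rewrite mulrAC.
  by apply: (capped_below_head sorted_jl) kl; rewrite ler_pdivlMr // mulrAC.
have water_level k : k \in j :: l -> water (r / E) k = r / E * e k.
  by move/capped/min_r.
apply: (AuxLevel (lam := r / E)).
- rewrite (eq_big_seq _ water_level) -mulr_sumr -def_E mulrVK //.
  by rewrite unitfE gt_eqF.
- by apply/hasP; exists j; [exact: mem_head | exact/capped/mem_head].
- move=> k kl; rewrite /= ltNge le_dj /= capped //.
  by rewrite water_level // mulrAC.
Qed.

(* Serving [j] her demand leaves enough resource for the others to rise above
   [j]'s ratio, because [j] got less than her proportional share. *)
Lemma demand_lt_level j l r E lam :
  sorted ratio_le (j :: l) -> E = \sum_(k <- j :: l) e k ->
  d j < r * e j / E -> \sum_(k <- l) water lam k = r - d j -> d j < lam * e j.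
Proof.
move=> sorted_jl def_E lt_dj sum_water; rewrite ltNge; apply/negP => le_lam.
have E_gt0 : 0 < E by rewrite def_E (sum_e_gt0 (mem_head j l)).
have ej := e_gt0 j.
have rest_ge0 : 0 <= E - e j.
  by rewrite def_E big_cons addrC addKr sumr_ge0 // => k _; exact: ltW.
have sum_capped : \sum_(k <- l) water lam k = lam * (E - e j).
  rewrite def_E big_cons addrC addKr mulr_sumr; apply: eq_big_seq => k kl.
  by apply/min_r; apply: (capped_below_head sorted_jl) kl; rewrite ler_pdivlMr.
move: lt_dj; rewrite ltr_pdivlMr // => lt_dj.
have : lam * e j * (E - e j) <= d j * (E - e j) by rewrite ler_wpM2r.
nra.
Qed.

Lemma aux_served j l r E :
  sorted ratio_le (j :: l) -> E = \sum_(k <- j :: l) e k ->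
  d j < r * e j / E -> aux_spec l (r - d j) (E - e j) -> aux_spec (j :: l) r E.
Proof.
move=> sorted_jl def_E lt_dj spec_l.
have head_j k : k \in j :: l -> k != j -> k \in l.
  by rewrite in_cons => /predU1P [-> | //]; rewrite eqxx.
case: spec_l => [sum_d aux_l | lam sum_water capped aux_l].
- apply: AuxServed; first by rewrite big_cons; lra.
  move=> k kl; rewrite /= lt_dj; case: eqP => [-> // | /eqP kj].
  exact/aux_l/head_j.
- have lt_lam := demand_lt_level sorted_jl def_E lt_dj sum_water.
  have water_j : water lam j = d j by apply/min_l/ltW.
  apply: (AuxLevel (lam := lam)).
  + by rewrite big_cons sum_water water_j; lra.
  + by rewrite /= capped orbT.
  + move=> k kl; rewrite /= lt_dj; case: eqP => [-> | /eqP kj].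
      by rewrite water_j leNgt lt_lam.
    exact/aux_l/head_j.
Qed.

Lemma mmf_auxP l r E :
  sorted ratio_le l -> 0 < r -> E = \sum_(k <- l) e k -> aux_spec l r E.
Proof.
elim: l r E => [|j l IHl] r E sorted_l r_gt0 def_E.
  by apply: AuxServed => //; rewrite big_nil.
have [lt_dj | ge_dj] := boolP (d j < r * e j / E); last first.
  exact: aux_saturating.
apply: aux_served => //; apply: IHl; first exact: path_sorted sorted_l.
- have E_gt0 : 0 < E by rewrite def_E (sum_e_gt0 (mem_head j l)).
  have : r * e j / E <= r.
    rewrite ler_pdivrMr // ler_pM2l // def_E big_cons lerDl.
    by rewrite sumr_ge0 // => k _; exact: ltW.
  lra.
- by rewrite def_E big_cons addrC addKr.
Qed.

Variant mmf_spec : Prop :=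
  | MMFServed of \sum_k d k < 1
      & (forall k, MMF e d k = d k) & (forall k, MMF_saturated e d k = false)
  | MMFLevel lam of \sum_k water lam k = 1 & (exists k, lam * e k <= d k)
      & (forall k, MMF e d k = water lam k)
      & (forall k, MMF_saturated e d k = (lam * e k <= d k)).

Lemma mmfP : \sum_k e k = 1 -> mmf_spec.
Proof.
move=> sum_e.
have sorted_order : sorted ratio_le (mmf_order e d).
  by apply: sort_sorted => j k; exact: le_total.
have big_order (F : 'I_n -> R) : \sum_(k <- mmf_order e d) F k = \sum_k F k.
  by rewrite (perm_big _ (permEl (perm_sort _ _))) big_enum.
have in_order k : k \in mmf_order e d by rewrite mem_sort mem_enum.
have := mmf_auxP (E := 1) sorted_order ltr01.
rewrite big_order sum_e => /(_ erefl).
case=> [sum_d aux | lam sum_water /hasP [k0 _ capped] aux].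
- apply: MMFServed => [|k|k]; first by rewrite -big_order.
    by rewrite /MMF aux.
  by rewrite /MMF_saturated aux.
- apply: (MMFLevel (lam := lam)) => [||k|k]; first by rewrite -big_order.
  + by exists k0.
  + by rewrite /MMF aux.
  + by rewrite /MMF_saturated aux.
Qed.

End WaterFilling.

Section Monotonicity.
Variables (R : realFieldType) (n : nat) (e : 'I_n -> R) (i : 'I_n).
Variables (D D' : 'I_n -> R).
Hypothesis e_gt0 : forall k, 0 < e k.
Hypothesis D'_eq : forall k, k != i -> D' k = D k.
Hypothesis lt_Di : D i < D' i.

Lemma water_le_off lam lam' k :
  lam' <= lam -> k != i -> water e D' lam' k <= water e D lam k.
Proof.
move=> le_lam ki; rewrite /water D'_eq // le_min !ge_min lexx /=.
by rewrite ler_pM2r ?le_lam ?orbT.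
Qed.

Lemma lower_level_uncapped lam lam' :
  \sum_k water e D' lam' k = \sum_k water e D lam k -> lam' < lam ->
  water e D' lam' i <= water e D lam i -> forall k, D k < lam * e k.
Proof.
move=> eq_sum lt_lam le_i k; rewrite ltNge; apply/negP => capped.
have le_water j : water e D' lam' j <= water e D lam j.
  by case: (eqVneq j i) => [-> // | ji]; rewrite water_le_off ?ltW.
have lt_k : water e D' lam' k < water e D lam k.
  rewrite [ltRHS]/water (min_r capped).
  by apply: le_lt_trans (water_le_level e D' lam' k) _; rewrite ltr_pM2r.
by move: (ltr_sum_at le_water lt_k); rewrite eq_sum ltxx.
Qed.

Lemma served_lt_water lam' :
  \sum_k D k < 1 -> \sum_k water e D' lam' k = 1 -> D i < water e D' lam' i.
Proof.
move=> sum_D sum_water; rewrite ltNge; apply/negP => le_i.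
suff : \sum_k water e D' lam' k <= \sum_k D k by rewrite sum_water; lra.
apply: ler_sum => k _; case: (eqVneq k i) => [-> // | ki].
by rewrite -D'_eq // water_le_demand.
Qed.

Lemma level_not_served lam :
  \sum_k water e D lam k = 1 -> ~ \sum_k D' k < 1.
Proof.
move=> sum_water sum_D'.
suff : \sum_k water e D lam k <= \sum_k D' k by rewrite sum_water; lra.
apply: ler_sum => k _; apply: le_trans (water_le_demand e D lam k) _.
by case: (eqVneq k i) => [-> | ki]; [exact: ltW | rewrite D'_eq].
Qed.

Lemma capped_level_le lam lam' :
  \sum_k water e D lam k = 1 -> \sum_k water e D' lam' k = 1 ->
  lam * e i <= D i -> lam <= lam'.
Proof.
move=> sum_water sum_water' capped; rewrite leNgt; apply/negP => lt_lam.
have le_i : water e D' lam' i <= water e D lam i.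
  rewrite [leRHS]/water (min_r capped).
  by apply: le_trans (water_le_level e D' lam' i) _; rewrite ler_pM2r ?ltW.
have := lower_level_uncapped _ lt_lam le_i i.
by rewrite sum_water sum_water' ltNge capped => /(_ erefl).
Qed.

Lemma uncapped_lt_water lam lam' :
  \sum_k water e D lam k = 1 -> \sum_k water e D' lam' k = 1 ->
  (exists k, lam * e k <= D k) -> D i < lam * e i -> D i < water e D' lam' i.
Proof.
move=> sum_water sum_water' [k0 capped] uncapped.
rewrite ltNge; apply/negP => le_i.
have le_lam' : lam' * e i <= D i.
  by move: le_i; rewrite ge_min leNgt lt_Di.
have lt_lam : lam' < lam by rewrite -(ltr_pM2r (e_gt0 i)); lra.
have water_i : water e D lam i = D i by apply/min_l/ltW.
have := lower_level_uncapped _ lt_lam; rewrite water_i sum_water sum_water'.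
by move=> /(_ erefl le_i k0); rewrite ltNge capped.
Qed.

Lemma mmf_share_lt_or_saturated :
  \sum_k e k = 1 ->
  MMF e D i < MMF e D' i \/
  [/\ MMF_saturated e D i, MMF_saturated e D' i & MMF e D i <= MMF e D' i].
Proof.
move=> sum_e.
case: (@mmfP _ _ e D e_gt0 sum_e) => [sum_D a sat | lam sum_water capped a sat];
  case: (@mmfP _ _ e D' e_gt0 sum_e) =>
    [sum_D' a' sat' | lam' sum_water' _ a' sat'].
- by left; rewrite a a'.
- by left; rewrite a a'; exact: (served_lt_water sum_D sum_water').
- by case: (level_not_served sum_water).
have [cap_i | uncap_i] := lerP (lam * e i) (D i); last first.
  left; rewrite a a' /water (min_l (ltW uncap_i)).
  exact: (uncapped_lt_water sum_water sum_water' capped uncap_i).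
have le_lam := capped_level_le sum_water sum_water' cap_i.
rewrite a a' sat sat' cap_i /water (min_r cap_i).
have [cap'_i | uncap'_i] := lerP (lam' * e i) (D' i).
  by right; rewrite ler_pM2r.
by left; exact: le_lt_trans cap_i lt_Di.
Qed.

End Monotonicity.

Theorem mainTheorem16 (R : realFieldType) (n : nat) (e d : 'I_n -> R)
  (i : 'I_n) (di di' : R) :
  (forall j, 0 < e j) -> \sum_j e j = 1 ->
  (forall j, 0 <= d j) -> 0 <= di -> di < di' ->
  MMF e (upd d i di) i <= MMF e (upd d i di') i /\
  (MMF e (upd d i di) i = MMF e (upd d i di') i ->
     MMF_saturated e (upd d i di) i /\ MMF_saturated e (upd d i di') i).
Proof.
move=> e_gt0 sum_e _ _ lt_di.
have D'_eq k : k != i -> upd d i di' k = upd d i di k.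
  by rewrite /upd => /negbTE ->.
have lt_Di : upd d i di i < upd d i di' i by rewrite /upd eqxx.
have := mmf_share_lt_or_saturated e_gt0 D'_eq lt_Di sum_e.
case=> [lt_a | [sat sat' le_a]].
- by split => [|eq_a]; [exact: ltW | move: lt_a; rewrite eq_a ltxx].
- by split.
Qed.
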